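(* Let $(\Gamma,M)$ be an E-GCM graph whose Coxeter group $W=W(\Gamma,M)$ is finite, with longest element $w_0$. Let $J\subseteq I_n$ and let $(w_0)_J$ be the longest element of $W_J$. Then for any $\lambda\in C_J$, every game sequence for $\lambda$ has length $\ell(w_0)-\ell((w_0)_J)$.
   Context: E-GCM $M=(M_{ij})_{i,j\in I_n}$: real, $M_{ii}=2$, $M_{ij}\le0$ ($i\ne j$), $M_{ij}\ne0\iff M_{ji}\ne0$, nonzero $M_{ij}M_{ji}$ either $\ge4$ or $=4\cos^2(\pi/m)$ with $m\ge3$ integer; nodes $\gamma_i$, adjacent iff $M_{ij}\ne0$. Positions $\lambda\in\mathbb{R}^n$; firing $\gamma_i$ allowed iff $\lambda_i>0$, replacing $\lambda_j$ by $\lambda_j-M_{ij}\lambda_i$. The numbers game fires nodes with positive population until none remain; a game sequence is the sequence of fired nodes. $W$: generators $s_i$, $s_i^2=e$, $(s_is_j)^{m_{ij}}=e$, $m_{ij}=k$ if $M_{ij}M_{ji}=4\cos^2(\pi/k)$ ($k\ge2$), $m_{ij}=\infty$ if $M_{ij}M_{ji}\ge4$; $\ell$ = length. $W_J=\langle s_j:j\in J\rangle$. $C_J$ = positions with $\lambda_j=0$ for $j\in J$ and $\lambda_i>0$ for $i\notin J$. *)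

From mathcomp Require Import all_boot.
From Stdlib Require Import Reals.
From Stdlib Require Import ClassicalEpsilon.

Set Implicit Arguments.
Unset Strict Implicit.
Unset Printing Implicit Defensive.

Definition EGCM (n : nat) (M : 'I_n -> 'I_n -> R) : Prop :=
  (forall i, M i i = 2%R) /\
  (forall i j, i != j -> (M i j <= 0)%R) /\
  (forall i j, i != j -> (M i j <> 0%R <-> M j i <> 0%R)) /\
  (forall i j, i != j -> M i j <> 0%R ->
      (4 <= M i j * M j i)%R \/
      exists m : nat, (3 <= m)%N /\ (M i j * M j i = 4 * (cos (PI / INR m)) ^ 2)%R).

(* Elements of W are represented by words in the generators s_i (letters in 'I_n).
   Relators: s_i s_i, and (s_i s_j)^{m_ij} whenever i <> j and
   M_ij M_ji = 4 cos^2(pi/m_ij) with m_ij >= 2 integer (m_ij = infinity otherwise,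
   i.e. no relator). *)
Definition cox_relator (n : nat) (M : 'I_n -> 'I_n -> R) (r : seq 'I_n) : Prop :=
  (exists i, r = [:: i; i]) \/
  (exists (i j : 'I_n) (k : nat), i != j /\ (2 <= k)%N /\
      (M i j * M j i = 4 * (cos (PI / INR k)) ^ 2)%R /\
      r = flatten (nseq k [:: i; j])).

(* Equality in W: the congruence on words generated by the relators
   (each generator is an involution, so words over the s_i suffice). *)
Inductive coxeq (n : nat) (M : 'I_n -> 'I_n -> R) : seq 'I_n -> seq 'I_n -> Prop :=
  | coxeq_refl w : coxeq M w w
  | coxeq_sym u v : coxeq M u v -> coxeq M v u
  | coxeq_trans u v w : coxeq M u v -> coxeq M v w -> coxeq M u w
  | coxeq_rel u r v : cox_relator M r -> coxeq M (u ++ r ++ v) (u ++ v).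

Definition cox_finite (n : nat) (M : 'I_n -> 'I_n -> R) : Prop :=
  exists L : seq (seq 'I_n), forall w, exists2 u, u \in L & coxeq M w u.

Definition pb (P : Prop) : bool :=
  if excluded_middle_informative P then true else false.

Lemma coxlen_ex (n : nat) (M : 'I_n -> 'I_n -> R) (w : seq 'I_n) :
  exists l, pb (exists w', coxeq M w w' /\ size w' = l).
Proof.
  exists (size w); rewrite /pb; case: excluded_middle_informative => // [[]].
  by exists w; split => //; exact: coxeq_refl.
Qed.

Definition coxlen (n : nat) (M : 'I_n -> 'I_n -> R) (w : seq 'I_n) : nat :=
  ex_minn (coxlen_ex M w).

(* w represents a longest element (w.r.t. the length l of W) among the elements
   of W represented by words satisfying P.  With P = (fun _ => True) this is the
   longest element of W; with P = (all (mem J)) it is the longest element of the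
   standard parabolic subgroup W_J = <s_j : j in J>. *)
Definition longest_in (n : nat) (M : 'I_n -> 'I_n -> R)
    (P : seq 'I_n -> Prop) (w : seq 'I_n) : Prop :=
  P w /\ forall u, P u -> (coxlen M u <= coxlen M w)%N.

Definition fire (n : nat) (M : 'I_n -> 'I_n -> R) (lam : 'I_n -> R) (i : 'I_n)
  : 'I_n -> R := fun j => (lam j - M i j * lam i)%R.

Fixpoint play (n : nat) (M : 'I_n -> 'I_n -> R) (lam : 'I_n -> R) (s : seq 'I_n)
  : 'I_n -> R :=
  match s with
  | [::] => lam
  | i :: s' => play M (fire M lam i) s'
  end.

Fixpoint legal (n : nat) (M : 'I_n -> 'I_n -> R) (lam : 'I_n -> R) (s : seq 'I_n)
  : Prop :=
  match s with
  | [::] => True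
  | i :: s' => (0 < lam i)%R /\ legal M (fire M lam i) s'
  end.

Definition terminal (n : nat) (lam : 'I_n -> R) : Prop :=
  forall i, (lam i <= 0)%R.

Definition finite_game_seq (n : nat) (M : 'I_n -> 'I_n -> R) (lam : 'I_n -> R)
    (s : seq 'I_n) : Prop :=
  legal M lam s /\ terminal (play M lam s).

Definition infinite_game_seq (n : nat) (M : 'I_n -> 'I_n -> R) (lam : 'I_n -> R)
    (f : nat -> 'I_n) : Prop :=
  forall k, (0 < play M lam (mkseq f k) (f k))%R.

Definition in_C (n : nat) (J : {set 'I_n}) (lam : 'I_n -> R) : Prop :=
  forall j, (j \in J -> lam j = 0%R) /\ (j \notin J -> (0 < lam j)%R).

(* Positions carry the contragredient action of W: a word acts by firing its
   letters in turn.  Relators act trivially: for [M i j * M j i = 4 cos^2 (pi/m)]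
   the rank-two coefficients of alternate firings are Chebyshev quotients of
   [cos (pi/m)] that come back to the identity after [m] rounds, and the other
   coordinates follow by linearity.
   The key fact is that for a dominant [lam] and an ascent [l(u s_i) > l(u)],
   the [i]-th coordinate of [lam.u] is nonnegative; by induction on [l(u)] it
   reduces to the dihedral case, where the coefficients are nonnegative as long
   as the alternating word is reduced, i.e. shorter than [m].
   For [lam] in [C_J] and [w] in [W_J], every legal move then is an ascent of
   [w s], so [l(w s) = l(w) + |s|] and games have at most [l(w0) - l(w0_J)]
   moves.  A terminal position [lam.s] and [lam.w0] are both antidominant and
   lie in one orbit, hence are equal; so [w0 s^-1] fixes [lam], lies in [W_J]
   (stabilizers of dominant positions are parabolic), and [|s|] is at least
   [l(w0) - l(w0_J)]. *)

From mathcomp Require Import all_boot.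
From Stdlib Require Import Reals.
From Stdlib Require Import Lra FunctionalExtensionality ClassicalEpsilon.
From mathcomp Require Import zify.

Set Implicit Arguments.
Unset Strict Implicit.
Unset Printing Implicit Defensive.

Section CoxeterWords.
Variables (n : nat) (M : 'I_n -> 'I_n -> R).

Lemma coxeq_cat a u v b : coxeq M u v -> coxeq M (a ++ u ++ b) (a ++ v ++ b).
Proof.
elim=> [w|u1 v1 _ IH|u1 v1 w1 _ IH1 _ IH2|u1 r v1 Hr].
- exact: coxeq_refl.
- exact: coxeq_sym.
- exact: coxeq_trans IH1 IH2.
- by have := coxeq_rel (a ++ u1) (v1 ++ b) Hr; rewrite -!catA.
Qed.

Lemma coxeq_catl a u v : coxeq M u v -> coxeq M (a ++ u) (a ++ v).
Proof. by move=> H; have := coxeq_cat a [::] H; rewrite !cats0. Qed.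

Lemma coxeq_catr u v b : coxeq M u v -> coxeq M (u ++ b) (v ++ b).
Proof. by move=> H; have := coxeq_cat [::] b H. Qed.

Lemma coxeq_sq a i b : coxeq M (a ++ [:: i; i] ++ b) (a ++ b).
Proof. by apply: coxeq_rel; left; exists i. Qed.

Lemma coxeq_rcons2 u i : coxeq M ((u ++ [:: i]) ++ [:: i]) u.
Proof. by have := coxeq_sq u i [::]; rewrite -catA !cats0. Qed.

Lemma coxeq_cat_rev u : coxeq M (u ++ rev u) [::].
Proof.
elim: u => [|i u IH]; first exact: coxeq_refl.
rewrite rev_cons -cats1 (_ : _ ++ _ = [:: i] ++ (u ++ rev u) ++ [:: i]) /=; last by rewrite catA.
apply: coxeq_trans (coxeq_cat [:: i] [:: i] IH) _.
exact: coxeq_sq [::] i [::].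
Qed.

Lemma coxeq_rev_cat u : coxeq M (rev u ++ u) [::].
Proof. by have := coxeq_cat_rev (rev u); rewrite revK. Qed.

Lemma coxeq_cat_nil_rev x y : coxeq M (x ++ y) [::] -> coxeq M x (rev y).
Proof.
move=> H; apply: coxeq_trans (_ : coxeq M x (x ++ y ++ rev y)) _.
  by apply: coxeq_sym; have := coxeq_catl x (coxeq_cat_rev y); rewrite cats0.
by rewrite catA; exact: (coxeq_catr (rev y) H).
Qed.

Lemma coxeq_catr_rev u s v : coxeq M (u ++ rev s) v -> coxeq M u (v ++ s).
Proof.
move=> H; apply: coxeq_trans (coxeq_catr s H); rewrite -catA.
by apply: coxeq_sym; have := coxeq_catl u (coxeq_rev_cat s); rewrite cats0.
Qed.

Lemma cox_relator_even r : cox_relator M r -> ~~ odd (size r).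
Proof.
case=> [[i ->]|[i [j [k [_ [_ [_ ->]]]]]]] //.
by elim: k => //= k /negbTE ->.
Qed.

Lemma coxeq_odd_size u v : coxeq M u v -> odd (size u) = odd (size v).
Proof.
elim=> [w|u1 v1 _ _|u1 v1 w1 _ IH1 _ IH2|u1 r v1 /cox_relator_even Hr] //.
- by rewrite IH1 IH2.
- by rewrite !size_cat !oddD (negbTE Hr).
Qed.

Lemma pbP (P : Prop) : reflect P (pb P).
Proof. by rewrite /pb; case: excluded_middle_informative => H; constructor. Qed.

Lemma coxlen_spec u : exists2 w, coxeq M u w & size w = coxlen M u.
Proof. by rewrite /coxlen; case: ex_minnP => m /pbP [w [Hw <-]] _; exists w. Qed.

Lemma coxlen_min u w : coxeq M u w -> coxlen M u <= size w.
Proof. by rewrite /coxlen; case: ex_minnP => m _ Hmin Hw; apply/Hmin/pbP; exists w. Qed.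

Lemma coxlen_coxeq u v : coxeq M u v -> coxlen M u = coxlen M v.
Proof.
move=> H; apply/eqP; rewrite eqn_leq; apply/andP; split.
- have [w Hw <-] := coxlen_spec v; exact: coxlen_min (coxeq_trans H Hw).
- have [w Hw <-] := coxlen_spec u; exact: coxlen_min (coxeq_trans (coxeq_sym H) Hw).
Qed.

Lemma coxlen_size u : coxlen M u <= size u.
Proof. exact/coxlen_min/coxeq_refl. Qed.

Lemma coxlen_cat u v : coxlen M (u ++ v) <= coxlen M u + coxlen M v.
Proof.
have [w Hw <-] := coxlen_spec u; have [w' Hw' <-] := coxlen_spec v.
rewrite -size_cat; apply: coxlen_min.
exact: coxeq_trans (coxeq_catr v Hw) (coxeq_catl w Hw').
Qed.

Lemma coxlen_odd u : odd (coxlen M u) = odd (size u).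
Proof. by have [w Hw <-] := coxlen_spec u; rewrite (coxeq_odd_size Hw). Qed.

Lemma coxlen_eq0 u : coxlen M u = 0 -> coxeq M u [::].
Proof. by have [w Hw <- /size0nil Hw0] := coxlen_spec u; rewrite -Hw0. Qed.

(* At most one by subadditivity, in both directions since [u i i] is equivalent
   to [u]; not zero since relators have even length. *)
Lemma coxlen_rcons u i :
  coxlen M (u ++ [:: i]) = (coxlen M u).+1 \/ coxlen M u = (coxlen M (u ++ [:: i])).+1.
Proof.
have le1 v : coxlen M (v ++ [:: i]) <= (coxlen M v).+1.
  by have := coxlen_cat v [:: i]; have := coxlen_size [:: i]; rewrite /=; lia.
have := le1 (u ++ [:: i]); rewrite (coxlen_coxeq (coxeq_rcons2 u i)) => le2.
have neq : coxlen M (u ++ [:: i]) != coxlen M u.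
  apply/negP=> /eqP eq_len; have := coxlen_odd (u ++ [:: i]).
  by rewrite eq_len coxlen_odd size_cat addn1 /=; case: odd.
by have := le1 u; lia.
Qed.

Definition ascent (u : seq 'I_n) (i : 'I_n) : bool := coxlen M u < coxlen M (u ++ [:: i]).

Lemma coxlen_ascent u i : ascent u i -> coxlen M (u ++ [:: i]) = (coxlen M u).+1.
Proof. by rewrite /ascent; case: (coxlen_rcons u i) => ->; lia. Qed.

Lemma coxlen_descent u i : ~~ ascent u i -> coxlen M u = (coxlen M (u ++ [:: i])).+1.
Proof. by rewrite /ascent; case: (coxlen_rcons u i) => ->; lia. Qed.

Lemma ascent_decomposition u : coxlen M u != 0 ->
  exists u' i, [/\ coxeq M u (u' ++ [:: i]), ascent u' i & coxlen M u = (coxlen M u').+1].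
Proof.
have [w Hw Hs] := coxlen_spec u; case/lastP: w Hw Hs => [|w i] Hw Hs; first by rewrite -Hs.
rewrite -cats1 in Hw Hs => _; exists w, i.
have Hlen := coxlen_coxeq Hw; have := coxlen_size w; rewrite size_cat addn1 in Hs => Hw_size.
have Hwi : coxlen M (w ++ [:: i]) = (coxlen M w).+1 by case: (coxlen_rcons w i); lia.
by split=> //; rewrite /ascent; lia.
Qed.

End CoxeterWords.

Section Alternating.
Variable T : eqType.

Fixpoint alt (c d : T) (k : nat) : seq T :=
  if k is k'.+1 then c :: alt d c k' else [::].

Lemma size_alt c d k : size (alt c d k) = k.
Proof. by elim: k c d => //= k IH c d; rewrite IH. Qed.

Lemma alt_rcons c d k : alt c d k ++ [:: if odd k then d else c] = alt c d k.+1.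
Proof. by elim: k c d => //= k IH c d; rewrite -IH; case: odd. Qed.

Lemma alt_add c d p q :
  alt c d (p + q) = alt c d p ++ (if odd p then alt d c q else alt c d q).
Proof. by elim: p c d => //= p IH c d; rewrite IH; case: odd. Qed.

Lemma rev_alt c d k : rev (alt c d k) = if odd k then alt c d k else alt d c k.
Proof.
elim: k c d => //= k IH c d; rewrite rev_cons IH -cats1.
by case: (boolP (odd k)) => Hk /=; [have := alt_rcons d c k | have := alt_rcons c d k];
  rewrite (negPf Hk) || rewrite Hk.
Qed.

Lemma flatten_alt c d k : flatten (nseq k [:: c; d]) = alt c d k.*2.
Proof. by elim: k => //= k ->. Qed.

Lemma all_alt c d k : all (fun e => (e == c) || (e == d)) (alt c d k).
Proof.
by elim: k c d => //= k IH c d; rewrite eqxx /=; apply: sub_all (IH d c) => e; rewrite orbC.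
Qed.

(* The alternating word of length [k] in [i] and [j] whose last letter is [j]. *)
Definition alt_last (i j : T) (k : nat) : seq T :=
  alt (if odd k then j else i) (if odd k then i else j) k.

Lemma alt_lastS i j k : alt_last i j k.+1 = (if odd k then i else j) :: alt_last i j k.
Proof. by rewrite /alt_last /=; case: odd. Qed.

Lemma alt_last_rcons i j k : alt_last i j k ++ [:: i] = alt_last j i k.+1.
Proof. by rewrite /alt_last -alt_rcons /=; case: odd. Qed.

Lemma alt_last_cons i j c k : (c == i) || (c == j) -> 0 < k ->
  c :: alt_last i j k = alt_last i j k.+1 \/
  exists k', k = k'.+1 /\ alt_last i j k = c :: alt_last i j k'.
Proof.
rewrite /alt_last; case: k => //= k /orP[] /eqP-> _; case Hk: (odd k) => /=;
  by [left | right; exists k; rewrite Hk].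
Qed.

End Alternating.

Section DihedralWords.
Variables (n : nat) (M : 'I_n -> 'I_n -> R).

Lemma coxeq_braid (c d : 'I_n) m :
  cox_relator M (flatten (nseq m [:: c; d])) -> coxeq M (alt c d m) (alt d c m).
Proof.
move=> /(coxeq_rel [::] [::]); rewrite /= cats0 flatten_alt -addnn alt_add.
by move/coxeq_cat_nil_rev; rewrite fun_if !rev_alt; case: odd.
Qed.

(* Past the braid length an alternating word is not reduced:
   [c d c ... (m+1 letters)] = [c c d c ... (m letters)] = [d c ... (m-1 letters)]. *)
Lemma coxlen_alt_braid (c d : 'I_n) m N : 0 < m < N ->
  coxeq M (alt c d m) (alt d c m) -> coxlen M (alt c d N) <= N - 2.
Proof.
move=> /andP[m_gt0 lt_mN] br.
have short (e f : 'I_n) : coxeq M (alt f e m) (alt e f m) -> coxlen M (alt e f m.+1) <= m.-1.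
  move=> Hb; rewrite (coxlen_coxeq (coxeq_catl [:: e] Hb)) -(prednK m_gt0).
  rewrite (coxlen_coxeq (coxeq_sq M [::] e (alt f e m.-1))).
  by have := coxlen_size M (alt f e m.-1); rewrite size_alt.
rewrite -(subnK lt_mN) alt_add; apply: leq_trans (coxlen_cat _ _ _) _.
have := coxlen_size M (alt c d (N - m.+1)); rewrite size_alt.
have : coxlen M (if odd (N - m.+1) then alt d c m.+1 else alt c d m.+1) <= m.-1.
  by case: odd; apply: short; [exact: br | exact: coxeq_sym].
lia.
Qed.

Lemma descent_alt_last u v (i j c : 'I_n) k : (c == i) || (c == j) -> 0 < k ->
  ~~ ascent M v c -> coxeq M u (v ++ alt_last i j k) -> coxlen M v + k = coxlen M u ->
  exists2 v', coxlen M v' < coxlen M v &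
    coxeq M u (v' ++ alt_last i j k.+1) /\ coxlen M v' + k.+1 = coxlen M u.
Proof.
move=> c_ij k_gt0 c_desc u_eq u_len; set v1 := v ++ [:: c].
have v_len : coxlen M v = (coxlen M v1).+1 := coxlen_descent c_desc.
have {}u_eq : coxeq M u (v1 ++ c :: alt_last i j k).
  by apply: coxeq_trans u_eq _; rewrite /v1 -catA; apply/coxeq_sym/coxeq_sq.
case: (alt_last_cons c_ij k_gt0) => [<- | [k' [k_eq alt_eq]]].
  by exists v1; [lia | split=> //; lia].
have : coxeq M u (v1 ++ alt_last i j k').
  by apply: coxeq_trans u_eq _; rewrite alt_eq; apply: coxeq_sq.
move/coxlen_coxeq; have := coxlen_cat M v1 (alt_last i j k').
have := coxlen_size M (alt_last i j k'); rewrite /alt_last size_alt; lia.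
Qed.

End DihedralWords.

(* [even_coef d k] and [odd_coef d k] are the coefficients of [lam i] and
   [- M j i * lam j] in the [i]-th coordinate after firing [i] and [j]
   alternately (see [play_alt_last]), where [d = M i j * M j i]. *)
Fixpoint dih_coef (d : R) (k : nat) : R * R :=
  if k is k'.+1 then
    let: (e, o) := dih_coef d k' in ((d * (e - o) - e)%R, (e - o)%R)
  else (1%R, 0%R).

Definition even_coef (d : R) (k : nat) : R := (dih_coef d k).1.
Definition odd_coef (d : R) (k : nat) : R := (dih_coef d k).2.

Lemma odd_coefS d k : odd_coef d k.+1 = (even_coef d k - odd_coef d k)%R.
Proof. by rewrite /odd_coef /even_coef /=; case: dih_coef. Qed.

Lemma even_coefS d k : even_coef d k.+1 = (d * odd_coef d k.+1 - even_coef d k)%R.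
Proof. by rewrite odd_coefS /odd_coef /even_coef /=; case: dih_coef. Qed.

Lemma dih_coef_large d k :
  (4 <= d)%R -> (0 <= odd_coef d k /\ 2 * odd_coef d k <= even_coef d k)%R.
Proof.
move=> d_ge4; elim: k => [|k [O_ge0 EO_ge]]; first by rewrite /odd_coef /even_coef /=; lra.
rewrite even_coefS odd_coefS; split; first lra.
have : (0 <= (d - 3) * (even_coef d k - 2 * odd_coef d k))%R by apply: Rmult_le_pos; lra.
have : (0 <= (d - 4) * odd_coef d k)%R by apply: Rmult_le_pos; lra.
nra.
Qed.

Lemma dih_coef_sin t k :
  (even_coef (4 * cos t ^ 2) k * sin t = sin ((2 * INR k + 1) * t))%R /\
  (odd_coef (4 * cos t ^ 2) k * sin (2 * t) = sin (2 * INR k * t))%R.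
Proof.
have sin_sum x : (sin (x + t) + sin (x - t) = 2 * sin x * cos t)%R.
  by rewrite sin_plus sin_minus; ring.
elim: k => [|k [IHE IHO]].
  rewrite /even_coef /odd_coef /=; split; ring_simplify (2 * 0 + 1)%R (2 * 0 * t)%R;
    by rewrite ?sin_0 ?Rmult_1_l ?Rmult_0_l.
have HO : (odd_coef (4 * cos t ^ 2) k.+1 * sin (2 * t) = sin (2 * INR k.+1 * t))%R.
  have := sin_sum ((2 * INR k + 1) * t)%R; rewrite odd_coefS S_INR sin_2a -IHE.
  rewrite (_ : (_ + t = 2 * (INR k + 1) * t)%R); last ring.
  rewrite (_ : (_ - t = 2 * INR k * t)%R); last ring.
  by rewrite -IHO sin_2a; nra.
split=> //.
have := sin_sum (2 * INR k.+1 * t)%R; rewrite even_coefS S_INR.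
rewrite (_ : (_ + t = (2 * (INR k + 1) + 1) * t)%R); last ring.
rewrite (_ : (_ - t = (2 * INR k + 1) * t)%R); last ring.
rewrite -IHE -S_INR -HO sin_2a; nra.
Qed.

Definition theta (m : nat) : R := (PI / INR m)%R.

Lemma INR_theta m : (0 < m)%N -> (INR m * theta m = PI)%R.
Proof. by move=> m_gt0; rewrite /theta; field; apply: not_0_INR; lia. Qed.

Lemma sin_theta_ge0 m x : (0 < m)%N -> (0 <= x <= INR m)%R -> (0 <= sin (x * theta m))%R.
Proof.
move=> m_gt0 x_bd; have m_pos : (0 < INR m)%R by apply: lt_0_INR; apply/ltP.
have := PI_RGT_0; have := INR_theta m_gt0; rewrite /theta => Hm Hpi.
apply: sin_ge_0; first by apply: Rmult_le_pos; [lra | apply: Rlt_le; apply: Rdiv_lt_0_compat].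
by rewrite -{2}Hm; apply: Rmult_le_compat_r; [apply: Rlt_le; apply: Rdiv_lt_0_compat | lra].
Qed.

Lemma sin_theta_gt0 m x : (0 < x < INR m)%R -> (0 < sin (x * theta m))%R.
Proof.
move=> x_bd; have m_gt0 : (0 < m)%N by apply/ltP; apply: INR_lt; rewrite /= ; lra.
have m_pos : (0 < INR m)%R by lra.
have := PI_RGT_0; have := INR_theta m_gt0; rewrite /theta => Hm Hpi.
apply: sin_gt_0; first by apply: Rmult_lt_0_compat; [lra | apply: Rdiv_lt_0_compat].
by rewrite -{2}Hm; apply: Rmult_lt_compat_r; [apply: Rdiv_lt_0_compat | lra].
Qed.

Lemma cos_theta2 : cos (theta 2) = 0%R.
Proof. by rewrite /theta (_ : INR 2 = 2%R) ?cos_PI2. Qed.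

Lemma INR_leq p q : (p <= q)%N -> (INR p <= INR q)%R.
Proof. by move/leP; apply: le_INR. Qed.

Lemma INR_double k : INR k.*2 = (2 * INR k)%R.
Proof. by rewrite -addnn plus_INR; ring. Qed.

Lemma sin_theta_pos m : (1 < m)%N -> (0 < sin (theta m))%R.
Proof.
move=> m_gt1; rewrite -[theta m]Rmult_1_l; apply: sin_theta_gt0.
by have := INR_leq m_gt1; rewrite /=; lra.
Qed.

Lemma four_cos2_theta_lt4 m : (1 < m)%N -> (4 * cos (theta m) ^ 2 < 4)%R.
Proof. by move/sin_theta_pos; have := sin2_cos2 (theta m); rewrite /Rsqr; nra. Qed.

Lemma even_coef_ge0 m k : (1 < m)%N -> (k.*2 < m)%N ->
  (0 <= even_coef (4 * cos (theta m) ^ 2) k)%R.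
Proof.
move=> m_gt1 /INR_leq; rewrite S_INR INR_double => k_bd.
have [E_sin _] := dih_coef_sin (theta m) k.
have s_gt0 := sin_theta_pos m_gt1.
have := sin_theta_ge0 (x := (2 * INR k + 1)%R) (ltnW m_gt1); rewrite -E_sin.
have := pos_INR k; nra.
Qed.

Lemma odd_coef_ge0 m k : (1 < m)%N -> (k.*2 <= m)%N ->
  (0 <= odd_coef (4 * cos (theta m) ^ 2) k)%R.
Proof.
move=> m_gt1 k_bd; case: k k_bd => [|k] k_bd; first by rewrite /odd_coef /=; lra.
case: (ltnP 2 m) => [m_gt2 | m_le2]; last first.
  have -> : k = 0%N by lia.
  by rewrite odd_coefS /odd_coef /even_coef /=; lra.
move/INR_leq: k_bd; rewrite INR_double => k_bd.
have [_ O_sin] := dih_coef_sin (theta m) k.+1.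
have m_ge3 : (3 <= INR m)%R by have := INR_leq m_gt2; rewrite !S_INR /=; lra.
have s_gt0 : (0 < sin (2 * theta m))%R by apply: sin_theta_gt0; lra.
have := sin_theta_ge0 (x := (2 * INR k.+1)%R) (ltnW (ltnW m_gt2)); rewrite -O_sin.
have := pos_INR k.+1; nra.
Qed.

Lemma even_coef_order m : (1 < m)%N -> even_coef (4 * cos (theta m) ^ 2) m = 1%R.
Proof.
move=> m_gt1; have [E_sin _] := dih_coef_sin (theta m) m.
have s_gt0 := sin_theta_pos m_gt1.
have : sin ((2 * INR m + 1) * theta m) = sin (theta m).
  rewrite -(sin_period (theta m) 1) /= -(INR_theta (ltnW m_gt1)); congr sin; ring.
by rewrite -E_sin -{2}[sin (theta m)]Rmult_1_l => /(Rmult_eq_reg_r _ _ _) ->; lra.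
Qed.

Lemma odd_coef_order m : (2 < m)%N -> odd_coef (4 * cos (theta m) ^ 2) m = 0%R.
Proof.
move=> m_gt2; have [_ O_sin] := dih_coef_sin (theta m) m.
have s_gt0 : (0 < sin (2 * theta m))%R.
  by apply: sin_theta_gt0; have := INR_leq m_gt2; rewrite !S_INR /=; lra.
have : sin (2 * INR m * theta m) = 0%R.
  by rewrite Rmult_assoc (INR_theta (ltnW (ltnW m_gt2))) sin_2PI.
by rewrite -O_sin -(Rmult_0_l (sin (2 * theta m))) => /(Rmult_eq_reg_r _ _ _) ->; lra.
Qed.

Section NumbersGame.
Variables (n : nat) (M : 'I_n -> 'I_n -> R).

Lemma play_cat lam u v : play M lam (u ++ v) = play M (play M lam u) v.
Proof. by elim: u lam => //= i u IH lam. Qed.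

Lemma play_rcons lam u i : play M lam (u ++ [:: i]) = fire M (play M lam u) i.
Proof. by rewrite play_cat. Qed.

Lemma fire_zero lam i : lam i = 0%R -> fire M lam i = lam.
Proof.
by move=> lam_i0; apply: functional_extensionality => j; rewrite /fire lam_i0; ring.
Qed.

Lemma play_opp lam s : play M (fun k => - lam k)%R s = (fun k => - play M lam s k)%R.
Proof.
elim: s lam => //= i s IH lam; rewrite -IH; congr play.
by apply: functional_extensionality => j; rewrite /fire; ring.
Qed.

Lemma legal_cat lam u v :
  legal M lam (u ++ v) <-> legal M lam u /\ legal M (play M lam u) v.
Proof. by elim: u lam => [|i u IH] lam /=; [tauto | rewrite IH; tauto]. Qed.

Lemma legal_rcons lam u i :
  legal M lam (u ++ [:: i]) <-> legal M lam u /\ (0 < play M lam u i)%R.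
Proof. by rewrite legal_cat /=; tauto. Qed.

Lemma play_comb_invariant (i j l : 'I_n) (a b : R) lam x :
  (forall c, (c == i) || (c == j) -> M c l = a * M c i + b * M c j)%R ->
  all (fun c => (c == i) || (c == j)) x ->
  (play M lam x l - a * play M lam x i - b * play M lam x j
   = lam l - a * lam i - b * lam j)%R.
Proof.
move=> Hc; elim: x lam => //= c x IH lam /andP[Hcx Hx].
by rewrite IH // /fire (Hc c Hcx); ring.
Qed.

Hypothesis M_diag : forall i, M i i = 2%R.

Lemma fire_self lam i : fire M lam i i = (- lam i)%R.
Proof. by rewrite /fire M_diag; ring. Qed.

Lemma fireK i : involutive (fun lam => fire M lam i).
Proof. by move=> lam; apply: functional_extensionality => j; rewrite /fire M_diag; ring. Qed.

Lemma play_revK lam s : play M (play M lam s) (rev s) = lam.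
Proof. by elim: s lam => //= i s IH lam; rewrite rev_cons -cats1 play_rcons IH fireK. Qed.

Lemma play_alt_last (i j : 'I_n) k lam :
  play M lam (alt_last i j k) i =
  (even_coef (M i j * M j i) k./2 * lam i
   - M j i * odd_coef (M i j * M j i) (uphalf k) * lam j)%R.
Proof.
elim: k lam => [|k IH] lam; first by rewrite /even_coef /odd_coef /=; ring.
rewrite alt_lastS /= IH uphalf_half.
by case: odd; rewrite /fire !M_diag /= ?add0n ?add1n ?even_coefS ?odd_coefS; ring.
Qed.

End NumbersGame.

Section EGCMAction.
Variables (n : nat) (M : 'I_n -> 'I_n -> R).
Hypothesis HM : EGCM M.

Lemma egcm_diag i : M i i = 2%R.
Proof. by case: HM. Qed.

Lemma egcm_off_diag_le0 i j : i != j -> (M i j <= 0)%R.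
Proof. by case: HM => _ [] + _; apply. Qed.

Lemma egcm_prod0 i j : i != j -> (M i j * M j i = 0)%R -> M j i = 0%R.
Proof.
case: HM => _ [_ [Hiff _]] ij /Rmult_integral [Mij0 | //].
by case: (Req_dec (M j i) 0) => // Mji; case: (proj2 (Hiff i j ij) Mji).
Qed.

Lemma egcm_pair_cases i j : i != j ->
  (4 <= M i j * M j i)%R \/
  exists m, [/\ (1 < m)%N, (M i j * M j i = 4 * cos (theta m) ^ 2)%R &
               cox_relator M (flatten (nseq m [:: i; j]))].
Proof.
move=> ij; case: (Req_dec (M i j) 0) => [Mij0 | Mij_neq0].
  have Hd : (M i j * M j i = 4 * cos (theta 2) ^ 2)%R.
    by rewrite Mij0 cos_theta2; ring.
  by right; exists 2%N; split; last (right; exists i, j, 2%N).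
case: HM => _ [_ [_ Hcase]]; case: (Hcase i j ij Mij_neq0) => [|[m [m_ge3 Hd]]].
  by left.
have m_gt1 : (1 < m)%N by apply: leq_trans m_ge3.
by right; exists m; split; last (right; exists i, j, m).
Qed.

Lemma play_alt_order i j k lam : i != j -> (1 < k)%N ->
  (M i j * M j i = 4 * cos (theta k) ^ 2)%R ->
  play M lam (alt i j k.*2) i = lam i.
Proof.
move=> ij k_gt1 Hd; have := play_alt_last egcm_diag i j k.*2 lam.
rewrite /alt_last odd_double doubleK uphalf_double Hd (even_coef_order k_gt1) => ->.
case: (ltnP 2 k) => [k_gt2 | k_le2]; first by rewrite (odd_coef_order k_gt2); ring.
have k2 : k = 2%N by apply/eqP; rewrite eqn_leq k_le2.
rewrite (egcm_prod0 ij); first ring.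
by rewrite Hd k2 cos_theta2; ring.
Qed.

Lemma play_relator r lam : cox_relator M r -> play M lam r = lam.
Proof.
case=> [[i ->] | [i [j [k [ij [k_gt1 [Hd ->]]]]]]]; first exact: (fireK egcm_diag).
rewrite flatten_alt; set mu := play M lam (alt i j k.*2).
have mu_i : mu i = lam i := play_alt_order lam ij k_gt1 Hd.
have mu_j : mu j = lam j.
  have E := play_revK egcm_diag lam (alt i j k.*2); rewrite rev_alt odd_double -/mu in E.
  rewrite -{1}E play_alt_order // 1?eq_sym // Rmult_comm; exact: Hd.
have d_lt4 := four_cos2_theta_lt4 k_gt1; rewrite -/(theta k) -Hd in d_lt4.
(* As [4 - M i j M j i <> 0], every column [l] of rows [i], [j] is a combination
   of columns [i] and [j] (Cramer), which yields an invariant coordinate. *)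
apply: functional_extensionality => l.
pose a := ((2 * M i l - M i j * M j l) / (4 - M i j * M j i))%R.
pose b := ((2 * M j l - M j i * M i l) / (4 - M i j * M j i))%R.
have rows c : (c == i) || (c == j) -> (M c l = a * M c i + b * M c j)%R.
  by case/orP => /eqP ->; rewrite !egcm_diag /a /b; field; lra.
have := play_comb_invariant lam rows (all_alt i j k.*2).
by rewrite -/mu mu_i mu_j; lra.
Qed.

Lemma play_coxeq u v lam : coxeq M u v -> play M lam u = play M lam v.
Proof.
move=> H; elim: H lam => [w|u1 v1 _ IH|u1 v1 w1 _ IH1 _ IH2|u1 r v1 Hr] lam.
- by [].
- by rewrite IH.
- by rewrite IH1 IH2.
- by rewrite !play_cat (play_relator _ Hr).
Qed.

Lemma play_alt_last_ge0 i j k mu : i != j -> (0 <= mu i)%R -> (0 <= mu j)%R ->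
  k.+1 <= coxlen M (alt_last j i k.+1) ->
  (0 <= play M mu (alt_last i j k) i)%R.
Proof.
move=> ij mu_i mu_j reduced; rewrite (play_alt_last egcm_diag).
have Mji_le0 := egcm_off_diag_le0 (i := j) (j := i); rewrite eq_sym in Mji_le0.
suff [E_ge0 O_ge0] : (0 <= even_coef (M i j * M j i) k./2)%R /\
                     (0 <= odd_coef (M i j * M j i) (uphalf k))%R.
  have := Rmult_le_pos _ _ E_ge0 mu_i; have := Rmult_le_pos _ _ O_ge0 mu_j.
  have := Mji_le0 ij; nra.
have half_bd := odd_double_half k; rewrite uphalf_half.
case: (egcm_pair_cases ij) => [d_ge4 | [m [m_gt1 Hd Hrel]]].
  by have := dih_coef_large k./2 d_ge4; have := dih_coef_large (odd k + k./2) d_ge4; lra.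
have k_lt_m : k < m.
  rewrite ltnNge; apply/negP => m_le_k.
  suff : coxlen M (alt_last j i k.+1) <= k.+1 - 2 by lia.
  rewrite /alt_last; apply: (coxlen_alt_braid (m := m)); first by apply/andP; split; lia.
  by case: odd; [| apply: coxeq_sym]; apply: coxeq_braid.
by rewrite Hd; split; [apply: even_coef_ge0 | apply: odd_coef_ge0]; lia.
Qed.

End EGCMAction.

Definition dominant (n : nat) (lam : 'I_n -> R) : Prop := forall k, (0 <= lam k)%R.

Lemma in_C_dominant n (J : {set 'I_n}) lam : in_C J lam -> dominant lam.
Proof. by move=> HC k; case: (HC k); case: (k \in J) => [-> // _ | _ /(_ isT)]; lra. Qed.

Lemma in_C_zero n (J : {set 'I_n}) lam (w : seq 'I_n) :
  in_C J lam -> all (mem J) w -> {in w, forall i, lam i = 0%R}.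
Proof. by move=> HC /allP wJ i /wJ iJ; apply: (HC i).1. Qed.


Section AscentPositivity.
Variables (n : nat) (M : 'I_n -> 'I_n -> R) (lam : 'I_n -> R).
Hypotheses (HM : EGCM M) (lam_dom : dominant lam).

(* Among the factorizations [u = v x] with [x] alternating in [i], [j] and
   lengths adding up, one with [v] shortest has [i] and [j] as ascents of [v];
   the claim then reduces to the rank-two computation [play_alt_last_ge0]. *)
Lemma play_ascent_dihedral u i j :
  (forall v c, coxlen M v < coxlen M u -> ascent M v c -> (0 <= play M lam v c)%R) ->
  i != j -> ascent M u i ->
  forall v k, 0 < k -> coxeq M u (v ++ alt_last i j k) -> coxlen M v + k = coxlen M u ->
  (0 <= play M lam u i)%R.
Proof.
move=> IHu ij u_asc v k; have [p] := ubnP (coxlen M v).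
elim: p v k => // p IHp v k /ltnSE v_le k_gt0 u_eq u_len.
case: (boolP (ascent M v i && ascent M v j)) => [/andP[v_i v_j] | /nandP v_desc].
  have v_lt : coxlen M v < coxlen M u by lia.
  rewrite (play_coxeq HM _ u_eq) play_cat.
  apply: play_alt_last_ge0 => //; [exact: IHu | exact: IHu |].
  have := coxlen_cat M v (alt_last j i k.+1).
  rewrite -alt_last_rcons catA -(coxlen_coxeq (coxeq_catr _ u_eq)) (coxlen_ascent u_asc).
  lia.
have [c c_ij c_desc] : exists2 c, (c == i) || (c == j) & ~~ ascent M v c.
  by case: v_desc => ?; [exists i | exists j]; rewrite ?eqxx ?orbT.
have [v' v'_lt [u_eq' u_len']] := descent_alt_last c_ij k_gt0 c_desc u_eq u_len.
by apply: (IHp v' k.+1) => //; lia.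
Qed.

Lemma play_ascent_ge0 u i : ascent M u i -> (0 <= play M lam u i)%R.
Proof.
have [p] := ubnP (coxlen M u); elim: p u i => // p IHp u i /ltnSE u_le u_asc.
have [/eqP u_len0 | u_len_neq0] := boolP (coxlen M u == 0).
  by rewrite (play_coxeq HM _ (coxlen_eq0 u_len0)).
have [u' [j [u_eq u'_asc u_len]]] := ascent_decomposition u_len_neq0.
have ij : i != j.
  apply/eqP => ij; move: u_asc; rewrite /ascent ij.
  by rewrite (coxlen_coxeq (coxeq_trans (coxeq_catr _ u_eq) (coxeq_rcons2 _ _ _))); lia.
have IHu v c : coxlen M v < coxlen M u -> ascent M v c -> (0 <= play M lam v c)%R.
  by move=> v_lt; apply: IHp; lia.
by apply: (play_ascent_dihedral IHu ij u_asc (k := 1) (v := u') isT u_eq); lia.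
Qed.

End AscentPositivity.

Section Stabilizers.
Variables (n : nat) (M : 'I_n -> 'I_n -> R).
Hypothesis HM : EGCM M.

Lemma play_descent_le0 lam u i :
  dominant lam -> ~~ ascent M u i -> (play M lam u i <= 0)%R.
Proof.
move=> lam_dom u_desc; have ui_asc : ascent M (u ++ [:: i]) i.
  by rewrite /ascent (coxlen_coxeq (coxeq_rcons2 _ _ _)) (coxlen_descent u_desc).
have := play_ascent_ge0 HM lam_dom ui_asc.
by rewrite play_rcons (fire_self (egcm_diag HM)); lra.
Qed.

Lemma play_zero_nodes lam (w : seq 'I_n) :
  {in w, forall i, lam i = 0%R} -> play M lam w = lam.
Proof.
elim: w => //= i w IH w_zero; rewrite fire_zero ?IH // => [j wj|]; apply: w_zero.
  by rewrite inE wj orbT.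
by rewrite inE eqxx.
Qed.

Lemma dominant_play_parabolic mu t : dominant mu -> dominant (play M mu t) ->
  exists2 v : seq 'I_n, {in v, forall i, mu i = 0%R} & coxeq M t v.
Proof.
move=> mu_dom; have [p] := ubnP (coxlen M t); elim: p t => // p IHp t /ltnSE t_le t_dom.
have [/eqP t_len0 | t_len_neq0] := boolP (coxlen M t == 0).
  by exists [::] => //; apply: coxlen_eq0.
have [t' [i [t_eq t'_asc t_len]]] := ascent_decomposition t_len_neq0.
have t'_i : play M mu t' i = 0%R.
  have := t_dom i; have := play_ascent_ge0 HM mu_dom t'_asc.
  by rewrite (play_coxeq HM _ t_eq) play_rcons (fire_self (egcm_diag HM)); lra.
rewrite (play_coxeq HM _ t_eq) play_rcons fire_zero // in t_dom.
have [v v0 t'_v] := IHp t' ltac:(lia) t_dom.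
exists (v ++ [:: i]); last exact: coxeq_trans t_eq (coxeq_catr _ t'_v).
move=> j; rewrite mem_cat inE => /orP[/v0 // | /eqP ->].
by rewrite -t'_i (play_coxeq HM _ t'_v) play_zero_nodes.
Qed.

Lemma dominant_play_fixed mu t :
  dominant mu -> dominant (play M mu t) -> play M mu t = mu.
Proof.
move=> mu_dom t_dom; have [v v0 t_v] := dominant_play_parabolic mu_dom t_dom.
by rewrite (play_coxeq HM _ t_v) play_zero_nodes.
Qed.

Lemma stabilizer_parabolic (J : {set 'I_n}) lam t : in_C J lam -> play M lam t = lam ->
  exists2 v : seq 'I_n, all (mem J) v & coxeq M t v.
Proof.
move=> HC t_fix; have lam_dom := in_C_dominant HC.
have [|v v0 t_v] := dominant_play_parabolic (t := t) lam_dom; first by rewrite t_fix.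
exists v => //; apply/allP => i /v0 lam_i0; apply: contraT => /(HC i).2; lra.
Qed.

Lemma coxlen_cat_legal lam (w s : seq 'I_n) :
  dominant lam -> {in w, forall i, lam i = 0%R} -> legal M lam s ->
  coxlen M (w ++ s) = coxlen M w + size s.
Proof.
move=> lam_dom w_zero; elim/last_ind: s => [|s i IH]; first by rewrite cats0 addn0.
rewrite -cats1 legal_rcons => -[s_legal s_i].
have asc : ascent M (w ++ s) i.
  apply/negPn/negP => /(play_descent_le0 lam_dom).
  by rewrite play_cat (play_zero_nodes w_zero); lra.
by rewrite catA (coxlen_ascent asc) IH // size_cat addn1 addnS.
Qed.

(* Both [-(lam s)] and [-(lam w0)] are dominant, as every node is a descent of
   the longest element, and they differ by the action of [rev s ++ w0]. *)
Lemma play_longest_terminal lam w0 s : dominant lam ->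
  (forall u, coxlen M u <= coxlen M w0) -> terminal (play M lam s) ->
  play M lam w0 = play M lam s.
Proof.
move=> lam_dom w0_max s_term; set z := play M lam s.
have mz_dom : dominant (fun k => - z k)%R by move=> k; have := s_term k; rewrite -/z; lra.
have mw0_dom : dominant (fun k => - play M lam w0 k)%R.
  move=> k; have := play_descent_le0 (i := k) lam_dom (u := w0).
  by rewrite /ascent -leqNgt w0_max => /(_ isT); lra.
have := dominant_play_fixed (t := rev s ++ w0) mz_dom.
rewrite play_opp play_cat /z (play_revK (egcm_diag HM)) => /(_ mw0_dom) fixed.
by apply: functional_extensionality => k; have := f_equal (fun g => g k) fixed => /=; lra.
Qed.

End Stabilizers.

Theorem proposition5p3 (n : nat) (M : 'I_n -> 'I_n -> R) (J : {set 'I_n})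
    (w0 w0J : seq 'I_n) (lam : 'I_n -> R) :
  EGCM M ->
  cox_finite M ->
  longest_in M (fun _ => True) w0 ->
  longest_in M (fun u => all (mem J) u) w0J ->
  in_C J lam ->
  (forall s, finite_game_seq M lam s -> size s = (coxlen M w0 - coxlen M w0J)%N) /\
  (forall f, ~ infinite_game_seq M lam f).
Proof.
move=> HM _ [_ w0_max] [w0J_J w0J_max] HC.
have lam_dom := in_C_dominant HC; have w0J_0 := in_C_zero HC w0J_J.
split=> [s [s_legal s_term] | f f_inf].
  have fixed : play M lam (w0 ++ rev s) = lam.
    rewrite play_cat (play_longest_terminal HM lam_dom (fun u => w0_max u I) s_term).
    exact: (play_revK (egcm_diag HM)).
  have [v vJ w0s_v] := stabilizer_parabolic HM HC fixed.
  have w0_vs := coxeq_catr_rev w0s_v.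
  have := coxlen_cat_legal HM lam_dom w0J_0 s_legal; have := w0_max (w0J ++ s) I.
  have := w0J_max v vJ; have := coxlen_cat M v s; have := coxlen_size M s.
  have := coxlen_coxeq w0_vs; lia.
have legal_prefix k : legal M lam (mkseq f k).
  by elim: k => // k IH; rewrite mkseqS -cats1 legal_rcons.
have := coxlen_cat_legal HM lam_dom w0J_0 (legal_prefix (coxlen M w0).+1).
by have := w0_max (w0J ++ mkseq f (coxlen M w0).+1) I; rewrite size_mkseq; lia.
Qed.
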